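(* Let $S$ be a qubit with $H_S=E|1\rangle\langle1|$, $E>0$, and $g=(1+e^{-\beta E})^{-1}$. Let $\rho=\begin{pmatrix}p&c\\c&1-p\end{pmatrix}$, $\sigma=\begin{pmatrix}q&d\\d&1-q\end{pmatrix}$ in the basis $\{|0\rangle,|1\rangle\}$ with $c,d\ge0$, and suppose $p\ne g$ and $\lambda:=\frac{(q-p)g}{g-p}\in[0,1]$. Then: (i) if there is a Thermal Operation $\mathcal{T}$ with $\mathcal{T}(\rho)=\sigma$, then $$d\le\frac{\sqrt{\big(q(1-g)-g(1-p)\big)\big(p(1-g)-g(1-q)\big)}}{|p-g|}\,c;$$ (ii) the channel $\mathcal{E}(\cdot)=\sum_{k\in\{0,1,-1\}}K_k(\cdot)K_k^\dagger$ with $K_0=\sqrt{1-\lambda e^{-\beta E}}\,|0\rangle\langle0|+\sqrt{1-\lambda}\,|1\rangle\langle1|$, $K_1=\sqrt{\lambda e^{-\beta E}}\,|1\rangle\langle0|$, $K_{-1}=\sqrt{\lambda}\,|0\rangle\langle1|$ satisfies $\mathcal{E}(\gamma_S)=\gamma_S$, is time-translation covariant, and maps $\rho$ to a state with populations $(q,1-q)$ and off-diagonal element equal to the right-hand side of the bound in (i).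
   Context: $\beta>0$; $\gamma_S=e^{-\beta H_S}/\mathrm{tr}\,e^{-\beta H_S}$. A Thermal Operation on $S$ is a channel $\mathcal{T}(\rho)=\mathrm{tr}_B[U(\rho\otimes\gamma_B)U^\dagger]$ with $B$ any finite-dimensional system, $H_B$ any Hamiltonian, $\gamma_B=e^{-\beta H_B}/\mathrm{tr}\,e^{-\beta H_B}$, and $U$ unitary with $[U,H_S\otimes\mathbb{I}+\mathbb{I}\otimes H_B]=0$. A channel $\mathcal{E}$ is time-translation covariant if $\mathcal{E}(e^{-iH_St}Xe^{iH_St})=e^{-iH_St}\mathcal{E}(X)e^{iH_St}$ for all $t$ and all $X$. *)

(* Scalars live in an arbitrary numClosedFieldType C
   (a model of the complex numbers); "real" means [x \is Num.real]. *)
From HB Require Import structures.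
From mathcomp Require Import all_boot all_order all_algebra.
Set Implicit Arguments. Unset Strict Implicit. Unset Printing Implicit Defensive.
Import Order.TTheory GRing.Theory Num.Theory.
Local Open Scope ring_scope.

Section QDefs.
Variable C : numClosedFieldType.

(* the real exponential x |-> e^x on the reals of C: a homomorphism
   (R,+) -> (R, times) with 1 + x <= e^x  (this pins down exp uniquely) *)
Definition is_real_exp (f : C -> C) : Prop :=
  (forall x y, x \is Num.real -> y \is Num.real -> f (x + y) = f x * f y) /\
  (forall x, x \is Num.real -> f x \is Num.real /\ 1 + x <= f x).

(* t |-> e^{i t} on the reals of C: a homomorphism (R,+) -> unit circle
   with |e^{it} - 1 - i t| <= t^2/2 (this pins it down uniquely) *)
Definition is_cis (f : C -> C) : Prop :=
  (forall s t, s \is Num.real -> t \is Num.real -> f (s + t) = f s * f t) /\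
  (forall t, t \is Num.real ->
     `|f t| = 1 /\ `|f t - 1 - 'i * t| <= t ^+ 2 / 2%:R).

Definition adj m n (A : 'M[C]_(m, n)) : 'M[C]_(n, m) := (map_mx Num.conj A)^T.
Definition hermitian n (A : 'M[C]_n) : Prop := adj A = A.
Definition unitary n (U : 'M[C]_n) : Prop := U *m adj U = 1%:M /\ adj U *m U = 1%:M.
Definition psd n (A : 'M[C]_n) : Prop :=
  hermitian A /\ forall v : 'cV[C]_n, 0 <= (adj v *m A *m v) 0 0.
Definition is_state n (A : 'M[C]_n) : Prop := psd A /\ \tr A = 1.

(* composite system S (x) B: index k : 'I_(m*n) <-> pair (i,j) *)
Definition pidx m n (k : 'I_(m * n)) : 'I_m * 'I_n :=
  enum_val (cast_ord (esym (mxvec_cast m n)) k).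
Definition tens m n (A : 'M[C]_m) (B : 'M[C]_n) : 'M[C]_(m * n) :=
  \matrix_(k, l) (A (pidx k).1 (pidx l).1 * B (pidx k).2 (pidx l).2).
Definition ptraceB m n (X : 'M[C]_(m * n)) : 'M[C]_m :=
  \matrix_(i, j) \sum_(b < n) X (mxvec_index i b) (mxvec_index j b).

(* Gibbs state gamma = e^{-beta H}/tr e^{-beta H} of a Hermitian H,
   the matrix function being defined through a spectral decomposition *)
Definition gibbs (expR : C -> C) (beta : C) n (H gam : 'M[C]_n) : Prop :=
  exists V : 'M[C]_n, exists e : 'rV[C]_n,
    unitary V /\ (forall i, e 0 i \is Num.real) /\
    H = V *m diag_mx e *m adj V /\
    gam = (\sum_i expR (- beta * e 0 i))^-1 *:
            (V *m diag_mx (\row_i expR (- beta * e 0 i)) *m adj V).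

Definition thermal_op (expR : C -> C) (beta : C) m (HS : 'M[C]_m)
    (T : 'M[C]_m -> 'M[C]_m) : Prop :=
  exists n : nat, exists HB : 'M[C]_n.+1, exists gB : 'M[C]_n.+1,
  exists U : 'M[C]_(m * n.+1),
    hermitian HB /\ gibbs expR beta HB gB /\ unitary U /\
    U *m (tens HS 1%:M + tens 1%:M HB) = (tens HS 1%:M + tens 1%:M HB) *m U /\
    forall rho, T rho = ptraceB (U *m tens rho gB *m adj U).

(* time-translation covariance w.r.t. the diagonal Hamiltonian H = diag_mx e,
   for which e^{-iHt} = diag(e^{-i e_k t}) *)
Definition evol (cis : C -> C) m (e : 'rV[C]_m) (t : C) : 'M[C]_m :=
  diag_mx (\row_i cis (- (e 0 i * t))).
Definition covariant (cis : C -> C) m (e : 'rV[C]_m) (T : 'M[C]_m -> 'M[C]_m) : Prop :=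
  forall t, t \is Num.real -> forall X : 'M[C]_m,
    T (evol cis e t *m X *m adj (evol cis e t)) =
    evol cis e t *m T X *m adj (evol cis e t).

Definition k0 : 'I_2 := 0.
Definition k1 : 'I_2 := 1.
Definition eS (E : C) : 'rV[C]_2 := \row_(i < 2) (if i == k1 then E else 0).
Definition HS (E : C) : 'M[C]_2 := diag_mx (eS E).
Definition qmat (a b : C) : 'M[C]_2 :=
  a *: delta_mx k0 k0 + b *: delta_mx k0 k1 + b *: delta_mx k1 k0
  + (1 - a) *: delta_mx k1 k1.

Definition gS (expR : C -> C) (beta E : C) : C := (1 + expR (- beta * E))^-1.
Definition lam (expR : C -> C) (beta E p q : C) : C :=
  (q - p) * gS expR beta E / (gS expR beta E - p).
Definition boundcoef (expR : C -> C) (beta E p q : C) : C :=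
  let g := gS expR beta E in
  sqrtC ((q * (1 - g) - g * (1 - p)) * (p * (1 - g) - g * (1 - q))) / `|p - g|.

Definition K0 expR beta E p q : 'M[C]_2 :=
  sqrtC (1 - lam expR beta E p q * expR (- beta * E)) *: delta_mx k0 k0
  + sqrtC (1 - lam expR beta E p q) *: delta_mx k1 k1.
Definition K1 expR beta E p q : 'M[C]_2 :=
  sqrtC (lam expR beta E p q * expR (- beta * E)) *: delta_mx k1 k0.
Definition Km1 expR beta E p q : 'M[C]_2 :=
  sqrtC (lam expR beta E p q) *: delta_mx k0 k1.
Definition kraus_ch expR beta E p q (X : 'M[C]_2) : 'M[C]_2 :=
  K0 expR beta E p q *m X *m adj (K0 expR beta E p q)
  + K1 expR beta E p q *m X *m adj (K1 expR beta E p q)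
  + Km1 expR beta E p q *m X *m adj (Km1 expR beta E p q).

End QDefs.

(* (i) Diagonalising the bath, a thermal operation is a dilation by a
   unitary U commuting with H_S (x) 1 + 1 (x) diag(ep).  Energy conservation kills all
   cross terms, so on a qubit state T acts by  p |-> p P00 + (1 - p) P01  and
   c |-> c S,  where P_ai are the transition probabilities |0> <- |i> averaged over the
   bath Gibbs weights and S is a weighted inner product of two rows of U.
   Cauchy-Schwarz gives |S|^2 <= P00 P11.  Unitarity gives P01 + P11 = 1 and, through
   detailed balance, g P00 + (1 - g) P01 = g; these express P00 and P11 in terms of
   p, q and g and turn sqrt (P00 P11) into the bound.  (ii) is a direct computation:
   the Kraus channel maps qmat a b to
   qmat ((1 - L e) a + L (1 - a)) (sqrt ((1 - L e) (1 - L)) b). *)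

From HB Require Import structures.
From mathcomp Require Import all_boot all_order all_algebra.
From mathcomp Require Import ring.
Import Order.TTheory GRing.Theory Num.Theory.
Local Open Scope ring_scope.
Set Implicit Arguments. Unset Strict Implicit. Unset Printing Implicit Defensive.

Lemma pidx_mxvec_index m n (i : 'I_m) (j : 'I_n) : pidx (mxvec_index i j) = (i, j).
Proof. by rewrite /pidx cast_ordK enum_rankK. Qed.

Lemma sum_mxvec_index (R : nmodType) m n (F : 'I_(m * n) -> R) :
  \sum_k F k = \sum_i \sum_j F (mxvec_index i j).
Proof.
rewrite pair_bigA /= (reindex (fun p : 'I_m * 'I_n => mxvec_index p.1 p.2)) //=.
exists (@pidx m n) => [[i j] _|k _]; first by rewrite pidx_mxvec_index.
by case/mxvec_indexP: k => i j; rewrite pidx_mxvec_index.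
Qed.

Lemma sum_delta_l (R : pzSemiRingType) n (j : 'I_n) (F : 'I_n -> R) :
  \sum_k (k == j)%:R * F k = F j.
Proof.
rewrite (bigD1 j) //= eqxx mul1r big1 ?addr0 // => k /negPf->.
by rewrite mul0r.
Qed.

Lemma commute_diag_mxE (R : comPzRingType) n (A : 'M[R]_n) (h : 'rV[R]_n) :
  A *m diag_mx h = diag_mx h *m A -> forall k l, A k l * h 0 l = h 0 k * A k l.
Proof.
move=> AhhA k l; have := congr1 (fun M : 'M[R]_n => M k l) AhhA.
by rewrite mul_mx_diag mul_diag_mx !mxE.
Qed.

Section Adjoint.
Variable C : numClosedFieldType.

Lemma adj_mul m n p (A : 'M[C]_(m, n)) (B : 'M[C]_(n, p)) : adj (A *m B) = adj B *m adj A.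
Proof. by rewrite /adj map_mxM trmx_mul. Qed.

Lemma adj1 n : adj (1%:M : 'M[C]_n) = 1%:M.
Proof. by apply/matrixP => i j; rewrite !mxE rmorph_nat eq_sym. Qed.

Lemma adjK m n (A : 'M[C]_(m, n)) : adj (adj A) = A.
Proof. by apply/matrixP => i j; rewrite !mxE conjCK. Qed.

Lemma unitary_mul n (A B : 'M[C]_n) : unitary A -> unitary B -> unitary (A *m B).
Proof.
move=> [AA1 AA2] [BB1 BB2]; rewrite /unitary adj_mul; split.
  by rewrite mulmxA -(mulmxA A) BB1 mulmx1 AA1.
by rewrite mulmxA -(mulmxA _ (adj A)) AA2 mulmx1 BB2.
Qed.

Lemma unitary_adj n (A : 'M[C]_n) : unitary A -> unitary (adj A).
Proof. by rewrite /unitary adjK => -[]. Qed.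

End Adjoint.

Section TensorProduct.
Variable C : numClosedFieldType.

Lemma eq_mxvec_index m n (i i' : 'I_m) (j j' : 'I_n) :
  (mxvec_index i j == mxvec_index i' j') = (i == i') && (j == j').
Proof.
apply/eqP/andP => [ij_eq|[/eqP-> /eqP->]] //.
by have := congr1 (@pidx m n) ij_eq; rewrite !pidx_mxvec_index => -[-> ->].
Qed.

Lemma matrix_mxvec_indexP m n (A B : 'M[C]_(m * n)) :
  (forall i j i' j', A (mxvec_index i j) (mxvec_index i' j') =
                     B (mxvec_index i j) (mxvec_index i' j')) -> A = B.
Proof.
move=> eqAB; apply/matrixP => k l.
by case/mxvec_indexP: k => i j; case/mxvec_indexP: l => i' j'; apply: eqAB.
Qed.

Lemma mulmx_mxvec_indexE p m n r (A : 'M[C]_(p, m * n)) (B : 'M[C]_(m * n, r)) k l :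
  (A *m B) k l = \sum_i \sum_j A k (mxvec_index i j) * B (mxvec_index i j) l.
Proof. by rewrite mxE sum_mxvec_index. Qed.

Lemma tensE m n (A : 'M[C]_m) (B : 'M[C]_n) i j i' j' :
  tens A B (mxvec_index i j) (mxvec_index i' j') = A i i' * B j j'.
Proof. by rewrite /tens mxE !pidx_mxvec_index. Qed.

Lemma ptraceBE m n (X : 'M[C]_(m * n)) i j :
  ptraceB X i j = \sum_b X (mxvec_index i b) (mxvec_index j b).
Proof. by rewrite /ptraceB mxE. Qed.

Lemma tens_mul m n (A A' : 'M[C]_m) (B B' : 'M[C]_n) :
  tens A B *m tens A' B' = tens (A *m A') (B *m B').
Proof.
apply: matrix_mxvec_indexP => i j i' j'.
rewrite mulmx_mxvec_indexE tensE !mxE big_distrl /=.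
apply: eq_bigr => k _; rewrite big_distrr /=; apply: eq_bigr => l _.
by rewrite !tensE mulrACA.
Qed.

Lemma adj_tens m n (A : 'M[C]_m) (B : 'M[C]_n) : adj (tens A B) = tens (adj A) (adj B).
Proof.
by apply: matrix_mxvec_indexP => i j i' j'; rewrite /adj !mxE !pidx_mxvec_index /= rmorphM.
Qed.

Lemma tens1 m n : tens (1%:M : 'M[C]_m) (1%:M : 'M[C]_n) = 1%:M.
Proof.
apply: matrix_mxvec_indexP => i j i' j'.
by rewrite tensE !mxE eq_mxvec_index; case: (i == i'); case: (j == j');
  rewrite ?mulr1 ?mulr0 ?mul0r.
Qed.

Lemma unitary_tens1 m n (V : 'M[C]_n) : unitary V -> unitary (tens (1%:M : 'M_m) V).
Proof.
by move=> [VV1 VV2]; rewrite /unitary adj_tens adj1 !tens_mul mul1mx VV1 VV2 tens1.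
Qed.

Lemma tens_diag m n (a : 'rV[C]_m) (b : 'rV[C]_n) :
  tens (diag_mx a) 1%:M + tens 1%:M (diag_mx b) =
  diag_mx (\row_k (a 0 (pidx k).1 + b 0 (pidx k).2)).
Proof.
apply: matrix_mxvec_indexP => i j i' j'.
rewrite !mxE !pidx_mxvec_index /= eq_mxvec_index.
by case: (i == i'); case: (j == j');
  rewrite /= ?mulr1n ?mulr0n ?mulr1 ?mulr0 ?mul0r ?mul1r ?addr0 ?add0r.
Qed.

Lemma tens1_conjE m n (V W : 'M[C]_n) (Y : 'M[C]_(m * n)) i b j b' :
  (tens 1%:M V *m Y *m tens 1%:M W) (mxvec_index i b) (mxvec_index j b') =
  \sum_b1 \sum_b2 V b b1 * Y (mxvec_index i b1) (mxvec_index j b2) * W b2 b'.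
Proof.
rewrite [RHS]exchange_big mulmx_mxvec_indexE [LHS]exchange_big /=; apply: eq_bigr => b2 _.
under eq_bigr do rewrite tensE [1%:M _ _]mxE mulrCA.
rewrite sum_delta_l mulmx_mxvec_indexE exchange_big big_distrl /=.
apply: eq_bigr => b1 _; under eq_bigr do rewrite tensE [1%:M _ _]mxE eq_sym -mulrA.
by rewrite sum_delta_l.
Qed.

Lemma ptraceB_conj1 m n (V : 'M[C]_n) (Y : 'M[C]_(m * n)) :
  adj V *m V = 1%:M -> ptraceB (tens 1%:M V *m Y *m tens 1%:M (adj V)) = ptraceB Y.
Proof.
move=> VV; apply/matrixP => i j; rewrite !ptraceBE.
under eq_bigr do rewrite tens1_conjE.
rewrite exchange_big /=; apply: eq_bigr => b1 _; rewrite exchange_big /=.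
transitivity (\sum_b2 (adj V *m V) b2 b1 * Y (mxvec_index i b1) (mxvec_index j b2)).
  apply: eq_bigr => b2 _; rewrite mxE big_distrl /=.
  by apply: eq_bigr => b _; rewrite /adj !mxE; ring.
by rewrite VV; under eq_bigr do rewrite mxE; rewrite sum_delta_l.
Qed.

Lemma mulmx_tens_diagE p m n (A : 'M[C]_(p, m * n))
    (X : 'M[C]_m) (d : 'rV[C]_n) k j b :
  (A *m tens X (diag_mx d)) k (mxvec_index j b) =
  \sum_i A k (mxvec_index i b) * X i j * d 0 b.
Proof.
rewrite mulmx_mxvec_indexE; apply: eq_bigr => i _.
under eq_bigr do rewrite tensE !mxE !mulrnAr mulrA.
rewrite (bigD1 b) //= eqxx mulr1n big1 ?addr0 // => b1 /negPf->.
by rewrite mulr0n.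
Qed.

End TensorProduct.

Definition bath_gibbs (C : numClosedFieldType) (expR : C -> C) (beta : C) n
    (ep : 'rV[C]_n) : 'M[C]_n :=
  (\sum_i expR (- beta * ep 0 i))^-1 *: diag_mx (\row_i expR (- beta * ep 0 i)).

(* Conjugating the dilation by [1 (x) V], with V diagonalising the bath Hamiltonian,
   leaves the channel unchanged and makes the bath Hamiltonian and Gibbs state diagonal. *)
Lemma thermal_op_diag_bath (C : numClosedFieldType) (expR : C -> C) (beta : C) m
    (H : 'M[C]_m) (T : 'M[C]_m -> 'M[C]_m) :
  thermal_op expR beta H T ->
  exists n (U : 'M[C]_(m * n.+1)) (ep : 'rV[C]_n.+1),
    [/\ unitary U, forall b, ep 0 b \is Num.real,
        U *m (tens H 1%:M + tens 1%:M (diag_mx ep)) =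
          (tens H 1%:M + tens 1%:M (diag_mx ep)) *m U
      & forall X, T X = ptraceB (U *m tens X (bath_gibbs expR beta ep) *m adj U)].
Proof.
move=> [n [HB [gB [U [_ [[V [ep [V_unitary [ep_real [HBE gBE]]]]]]]]]]].
move=> [U_unitary [U_Htot Tdef]]; have VV2 := proj2 V_unitary.
set W : 'M[C]_(m * n.+1) := tens 1%:M V.
have W_unitary : unitary W := unitary_tens1 m V_unitary.
have [WW1 WW2] := W_unitary.
have adjW : adj W = tens 1%:M (adj V) by rewrite adj_tens adj1.
set U' := adj W *m U *m W.
have UE : U = W *m U' *m adj W by rewrite /U' !mulmxA WW1 mul1mx -mulmxA WW1 mulmx1.
exists n, U', ep; split => //.
- exact: unitary_mul (unitary_mul (unitary_adj W_unitary) U_unitary) W_unitary.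
- have -> : tens H 1%:M + tens 1%:M (diag_mx ep) =
            adj W *m (tens H 1%:M + tens 1%:M HB) *m W.
    by rewrite adjW mulmxDr mulmxDl !tens_mul !mul1mx !mulmx1 VV2 HBE !mulmxA VV2
      mul1mx -mulmxA VV2 mulmx1.
  rewrite /U' !mulmxA -(mulmxA _ W (adj W)) WW1 mulmx1 -(mulmxA _ U) U_Htot.
  by rewrite -(mulmxA (adj W *m _) W (adj W)) WW1 mulmx1 !mulmxA.
- move=> X; rewrite Tdef; clearbody U'; rewrite UE !adj_mul !adjK.
  have -> : tens X gB = W *m tens X (bath_gibbs expR beta ep) *m adj W.
    by rewrite gBE adjW !tens_mul mul1mx mulmx1 /bath_gibbs scalemxAl scalemxAr.
  rewrite !mulmxA -(mulmxA _ (adj W) W) WW2 mulmx1 -(mulmxA _ (adj W) W) WW2 mulmx1.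
  by rewrite -(mulmxA W) -(mulmxA W) adjW ptraceB_conj1.
Qed.

Section RealExp.
Variables (C : numClosedFieldType) (expR : C -> C).
Hypothesis expR_spec : is_real_exp expR.

Lemma expR_real x : x \is Num.real -> expR x \is Num.real.
Proof. by move=> xr; case: (proj2 expR_spec x xr). Qed.

Lemma expRD x y : x \is Num.real -> y \is Num.real -> expR (x + y) = expR x * expR y.
Proof. exact: (proj1 expR_spec). Qed.

Lemma expR0 : expR 0 = 1.
Proof.
have [_ ge1] := proj2 expR_spec 0 (real0 _); rewrite addr0 in ge1.
have nz : expR 0 != 0 by apply: contraTneq ge1 => ->; rewrite ler10.
by apply: (mulfI nz); rewrite -expRD ?real0 // addr0 mulr1.
Qed.

Lemma expRNK x : x \is Num.real -> expR x * expR (- x) = 1.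
Proof. by move=> xr; rewrite -expRD ?realN // subrr expR0. Qed.

Lemma expR_gt0 x : x \is Num.real -> 0 < expR x.
Proof.
move=> xr; have x2r : x / 2%:R \is Num.real by rewrite realM ?realV ?realn.
have -> : expR x = expR (x / 2%:R) * (expR (x / 2%:R))^*.
  by rewrite conj_Creal ?expR_real // -expRD // -splitr.
rewrite lt_def mul_conjC_ge0 andbT conj_Creal ?expR_real // -expRD // -splitr.
by apply: (contra_neq _ (oner_neq0 C)) => x0; rewrite -(expRNK xr) x0 mul0r.
Qed.

Lemma expRN_lt1 x : 0 < x -> expR (- x) < 1.
Proof.
move=> x_gt0; have xr := gtr0_real x_gt0.
have [_ ge] := proj2 expR_spec x xr.
have gt1 : 1 < expR x by apply: lt_le_trans ge; rewrite ltrDl.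
have nz : expR x != 0 by rewrite lt0r_neq0 // expR_gt0.
have -> : expR (- x) = (expR x)^-1 by apply: (mulfI nz); rewrite expRNK // divff.
by rewrite invf_lt1 // expR_gt0.
Qed.

End RealExp.

Lemma weighted_cauchy_schwarz (C : numClosedFieldType) (I : finType) (w x y : I -> C) :
  (forall k, 0 <= w k) ->
  `|\sum_k w k * (x k * (y k)^*)| ^+ 2 <=
  (\sum_k w k * (x k * (x k)^*)) * (\sum_k w k * (y k * (y k)^*)).
Proof.
move=> w_ge0; have wr k : (w k)^* = w k by rewrite conj_Creal ?ger0_real.
set S := \sum_k _ * (x k * (y k)^*).
set Sx := \sum_k _ * (x k * (x k)^*).
set Sy := \sum_k _ * (y k * (y k)^*).
have lagrange :
    \sum_k \sum_l w k * w l * ((x k * y l - x l * y k) * (x k * y l - x l * y k)^*)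
    = Sx * Sy + Sy * Sx - S * S^* - S^* * S.
  rewrite /S rmorph_sum /Sx /Sy !big_distrlr -big_split -!sumrB /=.
  apply: eq_bigr => k _; rewrite -big_split -!sumrB /=; apply: eq_bigr => l _.
  by rewrite !(rmorphB, rmorphM) /= ?conjCK !wr; ring.
rewrite normCK -subr_ge0.
have -> : Sx * Sy - S * S^* = (Sx * Sy + Sy * Sx - S * S^* - S^* * S) / 2%:R by field.
rewrite -lagrange divr_ge0 ?ler0n //.
apply: sumr_ge0 => k _; apply: sumr_ge0 => l _.
by rewrite mulr_ge0 ?mul_conjC_ge0 ?mulr_ge0.
Qed.

Lemma sum_ord2 (R : nmodType) (F : 'I_2 -> R) : \sum_i F i = F k0 + F k1.
Proof. by rewrite big_ord_recl big_ord1; congr (F _ + F _); apply/val_inj. Qed.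

Lemma prod_ord2 (R : comPzSemiRingType) (F : 'I_2 -> R) : \prod_i F i = F k0 * F k1.
Proof. by rewrite big_ord_recl big_ord1; congr (F _ * F _); apply/val_inj. Qed.

Lemma mulmx2E (C : numClosedFieldType) (A B : 'M[C]_2) i j :
  (A *m B) i j = A i k0 * B k0 j + A i k1 * B k1 j.
Proof. by rewrite mxE sum_ord2. Qed.

Lemma ord2P (P : 'I_2 -> Prop) : P k0 -> P k1 -> forall i, P i.
Proof.
move=> P0 P1 i; have : (i == k0) || (i == k1) by case: i => [[|[|]]].
by case/orP => /eqP->.
Qed.

Lemma qmatE (C : numClosedFieldType) (a b : C) :
  [/\ qmat a b k0 k0 = a, qmat a b k0 k1 = b, qmat a b k1 k0 = b & qmat a b k1 k1 = 1 - a].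
Proof. by rewrite /qmat !mxE /=; split; ring. Qed.

Lemma eS_k0 (C : numClosedFieldType) (E : C) : eS E 0 k0 = 0.
Proof. by rewrite mxE. Qed.

Lemma eS_k1 (C : numClosedFieldType) (E : C) : eS E 0 k1 = E.
Proof. by rewrite mxE. Qed.

Lemma boundcoefE (C : numClosedFieldType) (expR : C -> C) (beta E p q M : C) :
  let g := gS expR beta E in
  p \is Num.real -> g \is Num.real -> p != g -> 0 <= M ->
  (q * (1 - g) - g * (1 - p)) * (p * (1 - g) - g * (1 - q)) = (p - g) ^+ 2 * M ->
  boundcoef expR beta E p q = sqrtC M.
Proof.
move=> g pr gr pg M_ge0 prodE; rewrite /boundcoef -/g prodE.
have pgr : p - g \is Num.real by rewrite rpredB.
rewrite {1}expr2 -{2}(conj_Creal pgr) sqrtCM ?nnegrE ?mul_conjC_ge0 // -normC_def.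
by rewrite mulrAC divff ?mul1r // normr_eq0 subr_eq0.
Qed.

Lemma transition_bound_identity (R : comPzRingType) (p q g P00 P01 : R) :
  q = p * P00 + (1 - p) * P01 -> g * P00 + (1 - g) * P01 = g ->
  (q * (1 - g) - g * (1 - p)) * (p * (1 - g) - g * (1 - q)) =
  (p - g) ^+ 2 * (P00 * (1 - P01)).
Proof.
move=> qE balance.
have -> : q * (1 - g) - g * (1 - p) = (p - g) * P00 + (1 - p) * (g * P00 + (1 - g) * P01 - g).
  by rewrite qE; ring.
have -> : p * (1 - g) - g * (1 - q) = (p - g) * (1 - P01) + p * (g * P00 + (1 - g) * P01 - g).
  by rewrite qE; ring.
by rewrite balance subrr !mulr0 !addr0; ring.
Qed.

Section ThermalQubit.
Variables (C : numClosedFieldType) (expR : C -> C) (beta E : C) (N : nat).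
Variables (U : 'M[C]_(2 * N.+1)) (ep : 'rV[C]_N.+1).
Hypotheses (expR_spec : is_real_exp expR) (beta_gt0 : 0 < beta) (E_gt0 : 0 < E).
Hypotheses (U_unitary : unitary U) (ep_real : forall b, ep 0 b \is Num.real).
Hypothesis U_conserves :
  U *m (tens (HS E) 1%:M + tens 1%:M (diag_mx ep)) =
  (tens (HS E) 1%:M + tens 1%:M (diag_mx ep)) *m U.

Local Notation u a b i b1 := (U (mxvec_index a b) (mxvec_index i b1)).
Local Notation g := (gS expR beta E).

Let Z := \sum_b expR (- beta * ep 0 b).
Let w b := Z^-1 * expR (- beta * ep 0 b).
Let channel X := ptraceB (U *m tens X (bath_gibbs expR beta ep) *m adj U).
Let P a i := \sum_b \sum_b1 w b1 * (u a b i b1 * (u a b i b1)^*).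
Let S := \sum_b \sum_b1 w b1 * (u k0 b k0 b1 * (u k1 b k1 b1)^*).

Let bath_exp_gt0 b : 0 < expR (- beta * ep 0 b).
Proof. by apply: expR_gt0; rewrite // realM ?realN ?ep_real ?gtr0_real. Qed.

Let Z_gt0 : 0 < Z.
Proof.
apply: (lt_le_trans (bath_exp_gt0 ord0)); rewrite /Z (bigD1 ord0) //= lerDl.
by apply: sumr_ge0 => b _; apply: ltW.
Qed.

Lemma bath_weight_ge0 b : 0 <= w b.
Proof. by rewrite mulr_ge0 ?invr_ge0 ?ltW. Qed.

Lemma sum_bath_weight : \sum_b w b = 1.
Proof. by rewrite -big_distrr /= mulVf ?lt0r_neq0. Qed.

Lemma bath_weight_shift b b1 : ep 0 b = E + ep 0 b1 -> (1 - g) * w b1 = g * w b.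
Proof.
move=> ep_b; have er : - beta * E \is Num.real by rewrite realM ?realN ?gtr0_real.
have e1_neq0 : 1 + expR (- beta * E) != 0 by rewrite lt0r_neq0 ?addr_gt0 ?expR_gt0.
rewrite /w ep_b mulrDr (expRD expR_spec) ?realM ?realN ?ep_real ?gtr0_real // /gS.
by field; rewrite e1_neq0 lt0r_neq0.
Qed.

Lemma bath_gibbsE : bath_gibbs expR beta ep = diag_mx (\row_b w b).
Proof.
apply/matrixP => b b1; rewrite !mxE.
by case: (b == b1); rewrite ?mulr1n ?mulr0n ?mulr0.
Qed.

Lemma channelE X a a' :
  channel X a a' = \sum_b \sum_b1 w b1 *
    \sum_i \sum_j X i j * (u a b i b1 * (u a' b j b1)^*).
Proof.
rewrite ptraceBE; apply: eq_bigr => b _.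
rewrite mulmx_mxvec_indexE exchange_big /=; apply: eq_bigr => b1 _.
rewrite [in RHS]exchange_big big_distrr /=; apply: eq_bigr => j _.
rewrite bath_gibbsE mulmx_tens_diagE /adj !mxE big_distrl big_distrr /=.
by apply: eq_bigr => i _; ring.
Qed.

Lemma unitary_conserves a b i b1 :
  u a b i b1 != 0 -> eS E 0 i + ep 0 b1 = eS E 0 a + ep 0 b.
Proof.
move=> u_neq0; apply: (mulfI u_neq0).
have := U_conserves; rewrite /HS tens_diag.
move/commute_diag_mxE/(_ (mxvec_index a b) (mxvec_index i b1)).
by rewrite !mxE !pidx_mxvec_index /= => ->; rewrite mulrC.
Qed.

Lemma unitary_cross_eq0 a b i b1 a' j :
  eS E 0 a' - eS E 0 a != eS E 0 j - eS E 0 i -> u a b i b1 * (u a' b j b1)^* = 0.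
Proof.
move=> neq; apply/eqP; rewrite mulf_eq0 conjC_eq0; apply: contraR neq.
rewrite negb_or => /andP[/unitary_conserves e1 /unitary_conserves e2].
rewrite -subr_eq0 (_ : _ - _ = eS E 0 i + ep 0 b1 - (eS E 0 a + ep 0 b)
                       - (eS E 0 j + ep 0 b1 - (eS E 0 a' + ep 0 b))); last by ring.
by rewrite e1 e2 !subrr.
Qed.

Let E_neq0 : E != 0. Proof. exact: lt0r_neq0. Qed.

Let E_neqN : E != - E.
Proof. by rewrite -addr_eq0 lt0r_neq0 ?addr_gt0. Qed.

Lemma channel_qmat00 x y : channel (qmat x y) k0 k0 = x * P k0 k0 + (1 - x) * P k0 k1.
Proof.
have [q00 q01 q10 q11] := qmatE x y.
rewrite channelE /P !big_distrr -big_split /=; apply: eq_bigr => b _.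
rewrite !big_distrr -big_split /=; apply: eq_bigr => b1 _.
rewrite !sum_ord2 q00 q01 q10 q11 ?(@unitary_cross_eq0 k0 b k0 b1 k0 k1)
  ?(@unitary_cross_eq0 k0 b k1 b1 k0 k0); first by ring.
all: rewrite !eS_k0 !eS_k1 ?subrr ?subr0 ?sub0r //; by rewrite eq_sym ?oppr_eq0.
Qed.

Lemma channel_qmat01 x y : channel (qmat x y) k0 k1 = y * S.
Proof.
have [q00 q01 q10 q11] := qmatE x y.
rewrite channelE /S !big_distrr /=; apply: eq_bigr => b _.
rewrite !big_distrr /=; apply: eq_bigr => b1 _.
rewrite !sum_ord2 q00 q01 q10 q11 ?(@unitary_cross_eq0 k0 b k0 b1 k1 k0)
  ?(@unitary_cross_eq0 k0 b k1 b1 k1 k0) ?(@unitary_cross_eq0 k0 b k1 b1 k1 k1);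
  first by ring.
all: by rewrite !eS_k0 !eS_k1 ?subrr ?subr0 ?sub0r.
Qed.

Lemma unitary_row_norm a b : \sum_i \sum_b1 u a b i b1 * (u a b i b1)^* = 1.
Proof.
have := congr1 (fun M : 'M[C]_(2 * N.+1) => M (mxvec_index a b) (mxvec_index a b))
  (proj1 U_unitary).
rewrite /= mulmx_mxvec_indexE mxE eqxx mulr1n /adj => <-.
by apply: eq_bigr => i _; apply: eq_bigr => b1 _; rewrite !mxE.
Qed.

Lemma unitary_col_norm i b1 : \sum_a \sum_b u a b i b1 * (u a b i b1)^* = 1.
Proof.
have := congr1 (fun M : 'M[C]_(2 * N.+1) => M (mxvec_index i b1) (mxvec_index i b1))
  (proj2 U_unitary).
rewrite /= mulmx_mxvec_indexE mxE eqxx mulr1n /adj => <-.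
by apply: eq_bigr => a _; apply: eq_bigr => b _; rewrite !mxE mulrC.
Qed.

Lemma transition_ge0 a i : 0 <= P a i.
Proof.
apply: sumr_ge0 => b _; apply: sumr_ge0 => b1 _.
by rewrite mulr_ge0 ?mul_conjC_ge0 ?bath_weight_ge0.
Qed.

Lemma transition_trace : P k0 k1 + P k1 k1 = 1.
Proof.
rewrite -(sum_ord2 (fun a => P a k1)) /P.
under eq_bigr do rewrite exchange_big /=.
rewrite exchange_big /= -sum_bath_weight; apply: eq_bigr => b1 _.
rewrite -[RHS]mulr1 -(unitary_col_norm k1 b1) big_distrr /=; apply: eq_bigr => a _.
by rewrite big_distrr.
Qed.

(* Energy conservation pairs each transition |0,b1> -> |0,b> with ep b = ep b1 and each
   |1,b1> -> |0,b> with ep b = E + ep b1: the Gibbs population of |0> is preserved. *)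
Lemma transition_balance : g * P k0 k0 + (1 - g) * P k0 k1 = g.
Proof.
have stay b b1 :
    w b1 * (u k0 b k0 b1 * (u k0 b k0 b1)^*) = w b * (u k0 b k0 b1 * (u k0 b k0 b1)^*).
  have [->|/unitary_conserves] := eqVneq (u k0 b k0 b1) 0; first by rewrite !mul0r !mulr0.
  by rewrite eS_k0 !add0r /w => ->.
have decay b b1 : (1 - g) * (w b1 * (u k0 b k1 b1 * (u k0 b k1 b1)^*)) =
                  g * (w b * (u k0 b k1 b1 * (u k0 b k1 b1)^*)).
  have [->|/unitary_conserves] := eqVneq (u k0 b k1 b1) 0; first by rewrite !mul0r !mulr0.
  by rewrite eS_k0 eS_k1 add0r => /esym/bath_weight_shift; rewrite !mulrA => ->.
transitivity (g * \sum_b w b); last by rewrite sum_bath_weight mulr1.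
rewrite /P !big_distrr -big_split /=; apply: eq_bigr => b _.
have := unitary_row_norm k0 b; rewrite sum_ord2 => row.
rewrite -[RHS]mulr1 -[X in _ = _ * X]row !big_distrr -!big_split big_distrr /=.
by apply: eq_bigr => b1 _; rewrite decay stay; ring.
Qed.

Lemma coherence_bound : `|S| ^+ 2 <= P k0 k0 * P k1 k1.
Proof.
rewrite /S /P !pair_bigA /=.
apply: (@weighted_cauchy_schwarz _ _ (fun x => w x.2)
  (fun x => u k0 x.1 k0 x.2) (fun x => u k1 x.1 k1 x.2)) => x.
exact: bath_weight_ge0.
Qed.

Lemma thermal_qubit_coherence_bound p q c d :
  p \is Num.real -> 0 <= c -> 0 <= d -> p != g ->
  channel (qmat p c) = qmat q d -> d <= boundcoef expR beta E p q * c.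
Proof.
move=> pr c_ge0 d_ge0 pg Tpc.
have [q00 q01 _ _] := qmatE q d.
have pop : q = p * P k0 k0 + (1 - p) * P k0 k1 by rewrite -(channel_qmat00 p c) Tpc q00.
have coh : d = c * S by rewrite -(channel_qmat01 p c) Tpc q01.
have er : - beta * E \is Num.real by rewrite realM ?realN ?gtr0_real.
have gr : g \is Num.real by rewrite /gS realV rpredD ?rpred1 ?(expR_real expR_spec).
rewrite (@boundcoefE _ _ _ _ _ _ (P k0 k0 * P k1 k1)) ?mulr_ge0 ?transition_ge0 //; last first.
  have -> : P k1 k1 = 1 - P k0 k1 by rewrite -transition_trace addrAC subrr add0r.
  exact: transition_bound_identity pop transition_balance.
rewrite -(ger0_norm d_ge0) coh normrM (ger0_norm c_ge0) mulrC ler_wpM2r //.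
by rewrite -(sqrCK (normr_ge0 S)) ler_sqrtC ?nnegrE ?exprn_ge0 ?mulr_ge0 ?transition_ge0
  ?coherence_bound.
Qed.

End ThermalQubit.

Lemma thermal_op_coherence_bound (C : numClosedFieldType) (expR : C -> C) (beta E p q c d : C)
    (T : 'M[C]_2 -> 'M[C]_2) :
  is_real_exp expR -> 0 < beta -> 0 < E ->
  p \is Num.real -> 0 <= c -> 0 <= d -> p != gS expR beta E ->
  thermal_op expR beta (HS E) T -> T (qmat p c) = qmat q d ->
  d <= boundcoef expR beta E p q * c.
Proof.
move=> expR_spec beta_gt0 E_gt0 pr c_ge0 d_ge0 pg /thermal_op_diag_bath.
move=> [n [U [ep [U_unitary ep_real U_conserves ->]]]].
exact: thermal_qubit_coherence_bound.
Qed.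

Lemma sqrtC_conj (C : numClosedFieldType) (x : C) : 0 <= x -> (sqrtC x)^* = sqrtC x.
Proof. by move=> x_ge0; rewrite conj_Creal ?sqrtC_real. Qed.

Lemma cis_conj (C : numClosedFieldType) (cis : C -> C) t :
  is_cis cis -> t \is Num.real -> cis t != 0 /\ (cis t)^* = (cis t)^-1.
Proof.
move=> [_ cis_norm] tr; have [norm1 _] := cis_norm t tr.
have cisK : cis t * (cis t)^* = 1 by rewrite -normCK norm1 expr1n.
have cis_neq0 : cis t != 0 by apply: contra_eq_neq cisK => ->; rewrite mul0r eq_sym oner_neq0.
by split => //; apply: (mulfI cis_neq0); rewrite cisK divff.
Qed.

Section KrausQubit.
Variables (C : numClosedFieldType) (expR : C -> C) (beta E p q : C).

Local Notation L := (lam expR beta E p q).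
Local Notation e := (expR (- beta * E)).
Local Notation K := (kraus_ch expR beta E p q).

Lemma kraus_chE X :
  [/\ K X k0 k0 = sqrtC (1 - L * e) * X k0 k0 * (sqrtC (1 - L * e))^*
                  + sqrtC L * X k1 k1 * (sqrtC L)^*,
      K X k0 k1 = sqrtC (1 - L * e) * X k0 k1 * (sqrtC (1 - L))^*,
      K X k1 k0 = sqrtC (1 - L) * X k1 k0 * (sqrtC (1 - L * e))^*
    & K X k1 k1 = sqrtC (1 - L) * X k1 k1 * (sqrtC (1 - L))^*
                  + sqrtC (L * e) * X k0 k0 * (sqrtC (L * e))^*].
Proof.
rewrite /kraus_ch /K0 /K1 /Km1 /adj.
by split; rewrite !(mulmx2E, mxE) /= ?(rmorphD, rmorphM, conjC0, conjC1); ring.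
Qed.

Lemma kraus_ch_qmat a b : 0 <= L <= 1 -> 0 <= e <= 1 ->
  K (qmat a b) = qmat ((1 - L * e) * a + L * (1 - a))
                      (sqrtC (1 - L * e) * sqrtC (1 - L) * b).
Proof.
move=> /andP[L_ge0 L_le1] /andP[e_ge0 e_le1].
have Le_ge0 : 0 <= L * e by rewrite mulr_ge0.
have Le_le1 : 0 <= 1 - L * e by rewrite subr_ge0 (le_trans _ L_le1) // ler_piMr.
have L_le1' : 0 <= 1 - L by rewrite subr_ge0.
have [k00 k01 k10 k11] := kraus_chE (qmat a b).
have [q00 q01 q10 q11] := qmatE a b.
have [r00 r01 r10 r11] := qmatE ((1 - L * e) * a + L * (1 - a))
                                (sqrtC (1 - L * e) * sqrtC (1 - L) * b).
have sqrtCC x : sqrtC x * sqrtC x = x by rewrite -expr2 sqrtCK.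
apply/matrixP; apply: ord2P; apply: ord2P.
- rewrite k00 r00 q00 q11 !sqrtC_conj //.
  by rewrite [_ * a * _]mulrAC [_ * (1 - a) * _]mulrAC !sqrtCC.
- by rewrite k01 r01 q01 !sqrtC_conj //; ring.
- by rewrite k10 r10 q10 !sqrtC_conj //; ring.
- rewrite k11 r11 q00 q11 !sqrtC_conj //.
  by rewrite [_ * (1 - a) * _]mulrAC [_ * a * _]mulrAC !sqrtCC; ring.
Qed.

Lemma kraus_ch_covariant (cis : C -> C) :
  is_cis cis -> E \is Num.real -> covariant cis (eS E) K.
Proof.
move=> cis_spec Er t tr X.
have phase i : - (eS E 0 i * t) \is Num.real by rewrite realN realM // mxE; case: ifP.
have [n0 c0] := cis_conj cis_spec (phase k0).
have [n1 c1] := cis_conj cis_spec (phase k1).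
rewrite eS_k0 in n0 c0; rewrite eS_k1 in n1 c1.
have [ka kb kc kd] := kraus_chE (evol cis (eS E) t *m X *m adj (evol cis (eS E) t)).
have [la lb lc ld] := kraus_chE X.
apply/matrixP; apply: ord2P; apply: ord2P;
  [rewrite ka | rewrite kb | rewrite kc | rewrite kd];
  rewrite /evol /adj !mulmx2E la lb lc ld !mxE /= ?mulr1n ?mulr0n ?conjC0 ?c0 ?c1;
  by field; rewrite ?n0 ?n1.
Qed.

End KrausQubit.

Lemma HS_spectrum (C : numClosedFieldType) (E : C) (V : 'M[C]_2) (ev : 'rV[C]_2) :
  unitary V -> HS E = V *m diag_mx ev *m adj V ->
  ev 0 k0 + ev 0 k1 = E /\ forall i, ev 0 i = 0 \/ ev 0 i = E.
Proof.
move=> [VV1 VV2] HSE.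
have trE : ev 0 k0 + ev 0 k1 = E.
  have := congr1 mxtrace HSE; rewrite mxtrace_mulC mulmxA VV2 mul1mx.
  by rewrite !mxtrace_diag !sum_ord2 eS_k0 eS_k1 add0r => ->.
have detE : ev 0 k0 * ev 0 k1 = 0.
  have := congr1 determinant HSE; rewrite !det_mulmx mulrAC -det_mulmx VV1 det1 mul1r.
  by rewrite !det_diag !prod_ord2 eS_k0 mul0r => ->.
split=> // i; have : ev 0 i * (ev 0 i - (ev 0 k0 + ev 0 k1)) = - (ev 0 k0 * ev 0 k1).
  by move: i; apply: ord2P; ring.
rewrite detE oppr0 trE => /eqP; rewrite mulf_eq0 subr_eq0.
by case/orP => /eqP; [left | right].
Qed.

(* As the spectrum is {0, E}, the Gibbs weight e^{-beta x} agrees on it with an affine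
   function of x, so the Gibbs state is an affine function of H_S itself. *)
Lemma gibbs_HS (C : numClosedFieldType) (expR : C -> C) (beta E : C) (gam : 'M[C]_2) :
  is_real_exp expR -> 0 < beta -> 0 < E ->
  gibbs expR beta (HS E) gam -> gam = qmat (gS expR beta E) 0.
Proof.
move=> expR_spec beta_gt0 E_gt0 [V [ev [V_unitary [_ [HSE gamE]]]]].
have [trE spec] := HS_spectrum V_unitary HSE.
set e := expR (- beta * E); set kappa := (e - 1) / E.
have E_neq0 : E != 0 := lt0r_neq0 E_gt0.
have e_gt0 : 0 < e by apply: expR_gt0; rewrite // realM ?realN ?gtr0_real.
have e1_neq0 : 1 + e != 0 by rewrite lt0r_neq0 // addr_gt0.
have affine i : expR (- beta * ev 0 i) = 1 + kappa * ev 0 i.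
  by case: (spec i) => ->; rewrite ?mulr0 ?(expR0 expR_spec) ?addr0 // /kappa -/e; field.
rewrite gamE.
have -> : diag_mx (\row_i expR (- beta * ev 0 i)) = 1%:M + kappa *: diag_mx ev.
  apply/matrixP => i j; rewrite !mxE affine.
  by case: (i == j); rewrite ?mulr1n ?mulr0n ?mulr0 ?addr0.
have -> : \sum_i expR (- beta * ev 0 i) = 1 + e.
  by rewrite sum_ord2 !affine addrACA -mulrDr trE /kappa; field.
rewrite mulmxDr mulmxDl mulmx1 (proj1 V_unitary) -scalemxAr -scalemxAl -HSE.
have [q00 q01 q10 q11] := qmatE (gS expR beta E) 0.
apply/matrixP; apply: ord2P; apply: ord2P;
  [rewrite q00 | rewrite q01 | rewrite q10 | rewrite q11];
  by rewrite !mxE /gS -/e /kappa /= ?mulr1n ?mulr0n; field; rewrite ?e1_neq0 ?E_neq0.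
Qed.

Lemma lam_identities (C : numClosedFieldType) (expR : C -> C) (beta E p q : C) :
  let e := expR (- beta * E) in
  let g := gS expR beta E in let L := lam expR beta E p q in
  1 + e != 0 -> p != g ->
  [/\ (1 - L * e) * g + L * (1 - g) = g,
      (1 - L * e) * p + L * (1 - p) = q
    & (q * (1 - g) - g * (1 - p)) * (p * (1 - g) - g * (1 - q)) =
      (p - g) ^+ 2 * ((1 - L * e) * (1 - L))].
Proof.
move=> e g L e1_neq0 pg.
have g_neq0 : g != 0 by rewrite invr_eq0.
have eE : e = g^-1 - 1 by rewrite /g /gS invrK addrC addKr.
have gp : g - p != 0 by rewrite subr_eq0 eq_sym.
by rewrite /L /lam -/g eE; split; field; rewrite ?gp ?g_neq0.
Qed.

Theorem mainTheorem16 (C : numClosedFieldType) (expR cis : C -> C)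
  (Hexp : is_real_exp expR) (Hcis : is_cis cis)
  (beta E p q c d : C) :
  0 < beta -> 0 < E ->
  p \is Num.real -> q \is Num.real -> 0 <= c -> 0 <= d ->
  is_state (qmat p c) -> is_state (qmat q d) ->
  p != gS expR beta E ->
  0 <= lam expR beta E p q <= 1 ->
  (forall T : 'M[C]_2 -> 'M[C]_2,
      thermal_op expR beta (HS E) T -> T (qmat p c) = qmat q d ->
      d <= boundcoef expR beta E p q * c)
  /\
  ((forall gam : 'M[C]_2, gibbs expR beta (HS E) gam ->
       kraus_ch expR beta E p q gam = gam)
   /\ covariant cis (eS E) (kraus_ch expR beta E p q)
   /\ kraus_ch expR beta E p q (qmat p c)
        = qmat q (boundcoef expR beta E p q * c)).
Proof.
move=> beta_gt0 E_gt0 pr _ c_ge0 d_ge0 _ _ pg L01.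
split=> [T|]; first exact: thermal_op_coherence_bound.
have er : - beta * E \is Num.real by rewrite realM ?realN ?gtr0_real.
have e_gt0 : 0 < expR (- beta * E) by apply: expR_gt0.
have e01 : 0 <= expR (- beta * E) <= 1.
  by rewrite ltW //= ltW // mulNr expRN_lt1 ?mulr_gt0.
have e1_neq0 : 1 + expR (- beta * E) != 0 := lt0r_neq0 (addr_gt0 ltr01 e_gt0).
have [gibbs_fix pop coh] := @lam_identities C expR beta E p q e1_neq0 pg.
have [L_ge0 L_le1] := andP L01; have [_ e_le1] := andP e01.
have gr : gS expR beta E \is Num.real by rewrite realV rpredD ?rpred1 ?(expR_real Hexp).
split; [|split].
- move=> gam /(gibbs_HS Hexp beta_gt0 E_gt0) ->.
  by rewrite kraus_ch_qmat // mulr0 gibbs_fix.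
- exact/kraus_ch_covariant/gtr0_real.
- rewrite kraus_ch_qmat // pop (boundcoefE pr gr pg _ coh) ?sqrtCM ?mulr_ge0 //.
  all: by rewrite ?nnegrE subr_ge0 // (le_trans _ L_le1) // ler_piMr.
Qed.
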